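(* Let $\mathcal E$ be an exact category. (1) For any subset $N\subseteq\mathsf M(\mathcal E)$, the subcategory $\mathcal D_N:=\{X\in\mathcal E\mid[X]\in N\}$ is closed under S-equivalences. (2) The maps $\mathcal D\mapsto\mathsf M_{\mathcal D}:=\{[X]\mid X\in\mathcal D\}$ and $N\mapsto\mathcal D_N$ are mutually inverse bijections between the set of subcategories of $\mathcal E$ closed under S-equivalences and the power set of $\mathsf M(\mathcal E)$.
   Context: All categories are skeletally small; subcategories are full and closed under isomorphisms. An exact category $\mathcal E$ is an additive full subcategory of an abelian category closed under extensions; conflations are short exact sequences with all terms in $\mathcal E$; an inflation is the first map of a conflation. The Grothendieck monoid $\mathsf M(\mathcal E)$ is the commutative monoid with a map $X\mapsto[X]$ on isomorphism classes with $[0]=0$ and $[Y]=[X]+[Z]$ for each conflation $0\to X\to Y\to Z\to0$, universal among such maps to commutative monoids. An admissible subobject series of $X$ is a chain $0=X_0\to X_1\to\cdots\to X_n=X$ of inflations (each $X_{i-1}\to X_i$ an inflation compatible with the inflations into $X$), with factors $X_i/X_{i-1}$ the cokernels. Objects $X,Y$ are S-equivalent, $X\sim_SY$, if they have admissible subobject series $(X_i)_{i=0}^n$, $(Y_i)_{i=0}^n$ of the same length and a permutation $\sigma$ of $\{1,\dots,n\}$ with $X_i/X_{i-1}\cong Y_{\sigma(i)}/Y_{\sigma(i)-1}$ for all $i$. A subcategory $\mathcal D$ is closed under S-equivalences if $X\in\mathcal D$ and $X\sim_SY$ imply $Y\in\mathcal D$. *)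

From HB Require Import structures.
From mathcomp Require Import all_boot fingroup perm all_algebra.
Set Implicit Arguments.
Unset Strict Implicit.
Unset Printing Implicit Defensive.
Import GRing.Theory.
Local Open Scope ring_scope.

(* Preadditive categories: Hom-sets are abelian groups, composition is
   bilinear.  Composition is written in diagrammatic order: comp f g = g o f. *)
Record PreaddCat := {
  Ob : Type;
  Hom : Ob -> Ob -> zmodType;
  idm : forall X, Hom X X;
  comp : forall X Y Z, Hom X Y -> Hom Y Z -> Hom X Z;
  comp_assoc : forall X Y Z W (f : Hom X Y) (g : Hom Y Z) (h : Hom Z W),
      comp (comp f g) h = comp f (comp g h);
  comp_idl : forall X Y (f : Hom X Y), comp (idm X) f = f;
  comp_idr : forall X Y (f : Hom X Y), comp f (idm Y) = f;
  comp_addl : forall X Y Z (f f' : Hom X Y) (g : Hom Y Z),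
      comp (f + f') g = comp f g + comp f' g;
  comp_addr : forall X Y Z (f : Hom X Y) (g g' : Hom Y Z),
      comp f (g + g') = comp f g + comp f g'
}.
Arguments idm {_} X.
Arguments comp {_ X Y Z} f g.

Section CatDefs.
Variable C : PreaddCat.
Local Notation Ob := (Ob C).
Local Notation Hom := (@Hom C).

Definition is_iso (X Y : Ob) (f : Hom X Y) : Prop :=
  exists g : Hom Y X, comp f g = idm X /\ comp g f = idm Y.

Definition isomorphic (X Y : Ob) : Prop := exists f : Hom X Y, is_iso f.

Definition is_zero_obj (Z : Ob) : Prop :=
  forall Y : Ob, (forall f g : Hom Z Y, f = g) /\ (forall f g : Hom Y Z, f = g).

Definition is_biproduct (X1 X2 P : Ob) (i1 : Hom X1 P) (i2 : Hom X2 P)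
    (p1 : Hom P X1) (p2 : Hom P X2) : Prop :=
  [/\ comp i1 p1 = idm X1, comp i2 p2 = idm X2, comp i1 p2 = 0,
      comp i2 p1 = 0 & comp p1 i1 + comp p2 i2 = idm P].

Definition is_kernel (K X Y : Ob) (k : Hom K X) (f : Hom X Y) : Prop :=
  comp k f = 0 /\
  forall W (h : Hom W X), comp h f = 0 -> exists! h' : Hom W K, comp h' k = h.

Definition is_cokernel (X Y Q : Ob) (f : Hom X Y) (c : Hom Y Q) : Prop :=
  comp f c = 0 /\
  forall W (h : Hom Y W), comp f h = 0 -> exists! h' : Hom Q W, comp c h' = h.

Definition is_mono (X Y : Ob) (f : Hom X Y) : Prop :=
  forall W (g h : Hom W X), comp g f = comp h f -> g = h.
Definition is_epi (X Y : Ob) (f : Hom X Y) : Prop :=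
  forall W (g h : Hom Y W), comp f g = comp f h -> g = h.

Definition is_abelian : Prop :=
  (exists Z, is_zero_obj Z) /\
  [/\ forall X1 X2, exists P i1 i2 p1 p2, @is_biproduct X1 X2 P i1 i2 p1 p2,
      forall X Y (f : Hom X Y), exists K (k : Hom K X), is_kernel k f,
      forall X Y (f : Hom X Y), exists Q (c : Hom Y Q), is_cokernel f c,
      forall X Y (f : Hom X Y), is_mono f -> exists Z (g : Hom Y Z), is_kernel f g
    & forall X Y (f : Hom X Y), is_epi f -> exists W (g : Hom W X), is_cokernel g f].

Definition is_ses (X Y Z : Ob) (f : Hom X Y) (g : Hom Y Z) : Prop :=
  is_kernel f g /\ is_cokernel f g.

(* Subcategories (full, closed under isomorphisms) are predicates on objects. *)
Definition iso_closed (P : Ob -> Prop) : Prop :=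
  forall X Y, P X -> isomorphic X Y -> P Y.

(* E is an exact category: additive full subcategory, closed under
   isomorphisms and extensions. *)
Definition is_exact_subcat (E : Ob -> Prop) : Prop :=
  [/\ iso_closed E,
      exists Z, is_zero_obj Z /\ E Z,
      forall X1 X2 P i1 i2 p1 p2, @is_biproduct X1 X2 P i1 i2 p1 p2 ->
        E X1 -> E X2 -> E P
    & forall X Y Z (f : Hom X Y) (g : Hom Y Z), is_ses f g -> E X -> E Z -> E Y].

Definition conflation (E : Ob -> Prop) (X Y Z : Ob) (f : Hom X Y) (g : Hom Y Z)
  : Prop := [/\ E X, E Y, E Z & is_ses f g].

Definition inflation (E : Ob -> Prop) (X Y : Ob) (f : Hom X Y) : Prop :=
  exists Z (g : Hom Y Z), conflation E f g.

(* Admissible subobject series 0 = X_0 -> X_1 -> ... -> X_n (= X) of length n.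
   ser_u i : X_i -> X are the inflations into X (ser_u n an isomorphism),
   ser_a i : X_i -> X_{i+1} the inflations of the chain, compatible with
   ser_u, and ser_F i (with ser_b i) the cokernel factor X_{i+1}/X_i. *)
Record adm_series (E : Ob -> Prop) (X : Ob) (n : nat) := {
  ser_X : nat -> Ob;
  ser_F : nat -> Ob;
  ser_a : forall i, Hom (ser_X i) (ser_X i.+1);
  ser_b : forall i, Hom (ser_X i.+1) (ser_F i);
  ser_u : forall i, Hom (ser_X i) X;
  ser_zero : is_zero_obj (ser_X 0);
  ser_confl : forall i, (i < n)%N -> conflation E (ser_a i) (ser_b i);
  ser_infl : forall i, (i <= n)%N -> inflation E (ser_u i);
  ser_compat : forall i, (i < n)%N -> comp (ser_a i) (ser_u i.+1) = ser_u i;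
  ser_top : is_iso (ser_u n)
}.

Definition S_equiv (E : Ob -> Prop) (X Y : Ob) : Prop :=
  exists n (sx : adm_series E X n) (sy : adm_series E Y n) (s : 'S_n),
    forall i : 'I_n, isomorphic (ser_F sx i) (ser_F sy (s i)).

Definition is_subcat (E D : Ob -> Prop) : Prop :=
  (forall X, D X -> E X) /\ iso_closed D.

Definition closed_under_S (E D : Ob -> Prop) : Prop :=
  forall X Y, D X -> S_equiv E X Y -> D Y.

Definition additive_class (E : Ob -> Prop) (T : nmodType) (f : Ob -> T) : Prop :=
  [/\ forall X Y, E X -> isomorphic X Y -> f X = f Y,
      forall Z, E Z -> is_zero_obj Z -> f Z = 0
    & forall X Y Z (a : Hom X Y) (b : Hom Y Z), conflation E a b ->
        f Y = f X + f Z].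

Definition monoid_hom (M T : nmodType) (phi : M -> T) : Prop :=
  phi 0 = 0 /\ forall a b, phi (a + b) = phi a + phi b.

Definition is_grothendieck_monoid (E : Ob -> Prop) (M : nmodType) (cls : Ob -> M)
  : Prop :=
  additive_class E cls /\
  forall (T : nmodType) (f : Ob -> T), additive_class E f ->
    exists phi : M -> T,
      [/\ monoid_hom phi, (forall X, E X -> phi (cls X) = f X)
        & forall psi : M -> T, monoid_hom psi ->
            (forall X, E X -> psi (cls X) = f X) -> forall m, psi m = phi m].

Definition D_of (E : Ob -> Prop) (M : Type) (cls : Ob -> M) (N : M -> Prop)
  : Ob -> Prop := fun X => E X /\ N (cls X).
Definition M_of (M : Type) (cls : Ob -> M) (D : Ob -> Prop) : M -> Prop :=
  fun m => exists X, D X /\ cls X = m.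

End CatDefs.

Record AbelianCat := { acat :> PreaddCat; acat_abelian : is_abelian acat }.

From Pilot Require Import Defs.
From HB Require Import structures.
From mathcomp Require Import all_boot fingroup perm all_algebra.
From mathcomp Require Import boolp.
Set Implicit Arguments.
Unset Strict Implicit.
Unset Printing Implicit Defensive.
Import GRing.Theory.
Local Open Scope ring_scope.

(* Classes in M(E) add up along admissible series, so S-equivalent objects
   have the same class; this gives (1).  For (2), the universal property of
   M(E) says that every congruence on the objects of E which respects
   isomorphisms, direct sums and conflations contains the relation [X] = [Y].
   Applied to the kernel of X |-> [X], whose quotient monoid then maps back
   onto M(E), it shows that every element of M(E) is a class.  Applied to
   "D (X (+) W) <-> D (Y (+) W) for all W in E", which respects conflations
   because for a conflation X -> Y -> Z the objects Y (+) W and X (+) Z (+) W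
   are S-equivalent, it shows that an S-closed D is a union of classes. *)

Section Preadditive.
Variable C : PreaddCat.
Local Notation Ob := (Defs.Ob C).
Local Notation Hom := (@Defs.Hom C).
Local Notation comp := (@Defs.comp C _ _ _).

Lemma comp0l (X Y Z : Ob) (g : Hom Y Z) : comp (0 : Hom X Y) g = 0.
Proof.
have h := comp_addl (0 : Hom X Y) 0 g; rewrite addr0 in h.
by apply: (addrI (comp (0 : Hom X Y) g)); rewrite addr0 -h.
Qed.

Lemma comp0r (X Y Z : Ob) (f : Hom X Y) : comp f (0 : Hom Y Z) = 0.
Proof.
have h := comp_addr f (0 : Hom Y Z) 0; rewrite addr0 in h.
by apply: (addrI (comp f (0 : Hom Y Z))); rewrite addr0 -h.
Qed.

Lemma isomorphic_refl (X : Ob) : isomorphic X X.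
Proof. by exists (idm X), (idm X); rewrite comp_idl. Qed.

Lemma isomorphic_sym (X Y : Ob) : isomorphic X Y -> isomorphic Y X.
Proof. by case=> f [g [fg gf]]; exists g, f. Qed.

Lemma zero_obj_isomorphic (Z Z' : Ob) :
  is_zero_obj Z -> is_zero_obj Z' -> isomorphic Z Z'.
Proof.
move=> zZ zZ'; exists 0, 0; split; first by case: (zZ Z) => + _; apply.
by case: (zZ' Z') => + _; apply.
Qed.

Lemma comp_idKl (X Y W : Ob) (f : Hom X Y) (g : Hom Y X) (x : Hom X W) :
  comp f g = idm X -> comp f (comp g x) = x.
Proof. by move=> fg; rewrite -comp_assoc fg comp_idl. Qed.

Lemma comp_0Kl (X Y Z W : Ob) (f : Hom X Y) (g : Hom Y Z) (x : Hom Z W) :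
  comp f g = 0 -> comp f (comp g x) = 0.
Proof. by move=> fg; rewrite -comp_assoc fg comp0l. Qed.

Ltac comp_norm := repeat progress rewrite ?comp_addl ?comp_addr ?comp0l ?comp0r
  ?comp_assoc ?comp_idl ?comp_idr ?addr0 ?add0r ?addrA.

Ltac biproduct_simpl := repeat (comp_norm; match goal with
 | H : comp ?a ?b = idm _ |- context [comp ?a (comp ?b ?x)] => rewrite (comp_idKl x H)
 | H : comp ?a ?b = idm _ |- context [comp ?a ?b] => rewrite H
 | H : comp ?a ?b = 0 |- context [comp ?a (comp ?b ?x)] => rewrite (comp_0Kl x H)
 | H : comp ?a ?b = 0 |- context [comp ?a ?b] => rewrite H
 | H : comp ?a ?b + comp ?c ?d = idm _ |- context [comp ?a ?b + comp ?c ?d] =>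
     rewrite H
 end); comp_norm.

Section Biproduct.
Context {X1 X2 P : Ob} {i1 : Hom X1 P} {i2 : Hom X2 P}.
Context {p1 : Hom P X1} {p2 : Hom P X2}.
Hypothesis bpP : is_biproduct i1 i2 p1 p2.

Lemma biproduct_ses : is_ses i1 p2.
Proof.
have [i1p1 i2p2 i1p2 i2p1 sum1] := bpP; split; split => //.
- move=> W h hp2; exists (comp h p1); split.
    rewrite comp_assoc -[RHS](comp_idr h) -sum1 comp_addr -(comp_assoc h p2) hp2.
    by rewrite comp0l addr0.
  by move=> h' <-; rewrite comp_assoc i1p1 comp_idr.
- move=> W h i1h; exists (comp i2 h); split.
    rewrite -comp_assoc -[RHS](comp_idl h) -sum1 comp_addl (comp_assoc p1) i1h.
    by rewrite comp0r add0r.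
  by move=> h' <-; rewrite -comp_assoc i2p2 comp_idl.
Qed.

Lemma biproduct_sym : is_biproduct i2 i1 p2 p1.
Proof. by case: bpP => *; split => //; rewrite addrC. Qed.

Lemma biproduct_ext_to (V : Ob) (x y : Hom V P) :
  comp x p1 = comp y p1 -> comp x p2 = comp y p2 -> x = y.
Proof.
case: bpP => _ _ _ _ sum1 e1 e2.
by rewrite -(comp_idr x) -(comp_idr y) -sum1 !comp_addr -!comp_assoc e1 e2.
Qed.

Lemma biproduct_ext_from (V : Ob) (x y : Hom P V) :
  comp i1 x = comp i1 y -> comp i2 x = comp i2 y -> x = y.
Proof.
case: bpP => _ _ _ _ sum1 e1 e2.
by rewrite -(comp_idl x) -(comp_idl y) -sum1 !comp_addl !comp_assoc e1 e2.
Qed.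

Lemma biproduct_isomorphic (X1' X2' P' : Ob) i1' i2' p1' p2' :
  @is_biproduct C X1' X2' P' i1' i2' p1' p2' ->
  isomorphic X1 X1' -> isomorphic X2 X2' -> isomorphic P P'.
Proof.
move=> [? ? ? ? ?] [a [a' [? ?]]] [b [b' [? ?]]]; have [? ? ? ? ?] := bpP.
by exists (comp p1 (comp a i1') + comp p2 (comp b i2')),
  (comp p1' (comp a' i1) + comp p2' (comp b' i2)); split; biproduct_simpl.
Qed.

End Biproduct.

Lemma biproduct_assoc (X Y Z P Q R : Ob) i1 i2 p1 p2 j1 j2 q1 q2 k1 k2 r1 r2 :
  @is_biproduct C X Y P i1 i2 p1 p2 -> @is_biproduct C P Z Q j1 j2 q1 q2 ->
  @is_biproduct C Y Z R k1 k2 r1 r2 ->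
  @is_biproduct C X R Q (comp i1 j1) (comp r1 (comp i2 j1) + comp r2 j2)
     (comp q1 p1) (comp q1 (comp p2 k1) + comp q2 k2).
Proof.
move=> bpP bpQ bpR; have [? ? ? ? ?] := bpP; have [? ? ? ? ?] := bpQ.
have [? ? ? ? ?] := bpR.
split; first by biproduct_simpl.
- by apply: (biproduct_ext_to bpR); biproduct_simpl.
- by biproduct_simpl.
- by biproduct_simpl.
apply: (biproduct_ext_to bpQ); biproduct_simpl => //.
by apply: (biproduct_ext_to bpP); biproduct_simpl.
Qed.

Lemma biproduct_zeror (X Z : Ob) : is_zero_obj Z ->
  @is_biproduct C X Z X (idm X) 0 (idm X) 0.
Proof.
move=> zZ; split; rewrite ?comp_idl ?comp0l ?addr0 //.
by case: (zZ Z) => + _; apply.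
Qed.

(* The direct sum of a short exact sequence with 0 -> W = W -> 0. *)
Lemma ses_biproductr (X Y Z W P Q : Ob) (f : Hom X Y) (g : Hom Y Z)
    j1 j2 q1 q2 k1 k2 r1 r2 :
  is_ses f g -> @is_biproduct C Y W P j1 j2 q1 q2 ->
  @is_biproduct C Z W Q k1 k2 r1 r2 ->
  is_ses (comp f j1) (comp q1 (comp g k1) + comp q2 k2).
Proof.
move=> [[fg0 kerf] [_ cokg]] bpP bpQ; have [? ? ? ? sumP] := bpP.
have [? ? ? ? sumQ] := bpQ; split; split; first by biproduct_simpl.
- move=> V h hfg.
  have hq2 : comp h q2 = 0.
    by have := congr1 (comp^~ r2) hfg; rewrite comp0l; biproduct_simpl.
  have hq1g : comp (comp h q1) g = 0.
    by have := congr1 (comp^~ r1) hfg; rewrite comp0l; biproduct_simpl.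
  have [h' [h'f uniq_h']] := kerf V _ hq1g.
  exists h'; split.
    by apply: (biproduct_ext_to bpP); rewrite ?hq2 -?h'f; biproduct_simpl.
  by move=> x xf; apply: uniq_h'; rewrite -xf; biproduct_simpl.
- by biproduct_simpl.
- move=> V h hfh.
  have fj1h : comp f (comp j1 h) = 0 by rewrite -comp_assoc.
  have [t [gt uniq_t]] := cokg V _ fj1h.
  exists (comp r1 t + comp r2 (comp j2 h)); split.
    by apply: (biproduct_ext_from bpP); rewrite -?gt; biproduct_simpl.
  move=> x hx.
  have k2x : comp k2 x = comp j2 h by rewrite -hx; biproduct_simpl.
  have k1x : comp g (comp k1 x) = comp j1 h by rewrite -hx; biproduct_simpl.
  by rewrite (uniq_t _ k1x) -k2x -!comp_assoc -comp_addl sumQ comp_idl.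
Qed.

End Preadditive.

Section ConflationSeries.
Variable C : PreaddCat.
Local Notation Ob := (Defs.Ob C).
Local Notation Hom := (@Defs.Hom C).
Local Notation comp := (@Defs.comp C _ _ _).
Variables (E : Ob -> Prop) (X Y Z W P Q Z0 : Ob) (f : Hom X Y) (g : Hom Y Z).
Variables (j1 : Hom Y P) (j2 : Hom W P) (q1 : Hom P Y) (q2 : Hom P W).
Variables (k1 : Hom Z Q) (k2 : Hom W Q) (r1 : Hom Q Z) (r2 : Hom Q W).
Hypotheses (exactE : is_exact_subcat E) (fgE : conflation E f g) (EW : E W).
Hypotheses (bpP : is_biproduct j1 j2 q1 q2) (bpQ : is_biproduct k1 k2 r1 r2).
Hypotheses (zZ0 : is_zero_obj Z0) (EZ0 : E Z0).

(* The series 0 -> X -> Y -> P of P = Y (+) W; its factors are X, Z and W. *)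
Definition chain_obj (i : nat) : Ob :=
  match i with 0 => Z0 | 1 => X | 2 => Y | _ => P end.
Definition chain_factor (i : nat) : Ob :=
  match i with 0 => X | 1 => Z | _ => W end.
Definition chain_step (i : nat) : Hom (chain_obj i) (chain_obj i.+1) :=
  match i as n return Hom (chain_obj n) (chain_obj n.+1) with
  | 0 => 0 | 1 => f | 2 => j1 | _.+3 => idm P end.
Definition chain_quot (i : nat) : Hom (chain_obj i.+1) (chain_factor i) :=
  match i as n return Hom (chain_obj n.+1) (chain_factor n) with
  | 0 => idm X | 1 => g | _.+2 => q2 end.
Definition chain_incl (i : nat) : Hom (chain_obj i) P :=
  match i as n return Hom (chain_obj n) P with
  | 0 => 0 | 1 => comp f j1 | 2 => j1 | _.+3 => idm P end.

Lemma ses_from_zero (V : Ob) : is_ses (0 : Hom Z0 V) (idm V).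
Proof. exact/biproduct_ses/biproduct_sym/biproduct_zeror. Qed.

Lemma ses_to_zero (V : Ob) : is_ses (idm V) (0 : Hom V Z0).
Proof. exact/biproduct_ses/biproduct_zeror. Qed.

Lemma conflation_biproduct_series :
  exists s : adm_series E P 3, forall i, ser_F s i = chain_factor i.
Proof.
have [_ _ E_biproduct _] := exactE; have [EX EY EZ fg] := fgE.
have EP : E P by exact: (E_biproduct _ _ _ _ _ _ _ bpP).
have EQ : E Q by exact: (E_biproduct _ _ _ _ _ _ _ bpQ).
unshelve eexists (@Build_adm_series C E P 3 chain_obj chain_factor chain_step
  chain_quot chain_incl zZ0 _ _ _ _) => //.
- case=> [|[|[|i]]] //= _; split => //; first exact: ses_from_zero.
  exact: biproduct_ses bpP.
- case=> [|[|[|[|i]]]] //= _.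
  + by exists P, (idm P); split => //; apply: ses_from_zero.
  + exists Q, (comp q1 (comp g k1) + comp q2 k2); split => //.
    exact: ses_biproductr fg bpP bpQ.
  + by exists W, q2; split => //; apply: biproduct_ses bpP.
  + by exists Z0, 0; split => //; apply: ses_to_zero.
- by case=> [|[|[|i]]] //= _; rewrite ?comp0l ?comp_idr.
- by exists (idm P); rewrite comp_idl.
Qed.

End ConflationSeries.

Section ExactCategory.
Variables (C : PreaddCat) (E : Defs.Ob C -> Prop).
Local Notation Ob := (Defs.Ob C).
Local Notation Hom := (@Defs.Hom C).
Local Notation comp := (@Defs.comp C _ _ _).
Hypothesis biproducts_exist : forall X1 X2 : Ob,
  exists P (i1 : Hom X1 P) (i2 : Hom X2 P) (p1 : Hom P X1) (p2 : Hom P X2),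
    is_biproduct i1 i2 p1 p2.
Hypothesis exactE : is_exact_subcat E.

Record biproduct (X1 X2 : Ob) := Biproduct {
  bp_obj : Ob;
  bp_in1 : Hom X1 bp_obj;
  bp_in2 : Hom X2 bp_obj;
  bp_out1 : Hom bp_obj X1;
  bp_out2 : Hom bp_obj X2;
  bp_spec : is_biproduct bp_in1 bp_in2 bp_out1 bp_out2 }.

Lemma biproduct_inhabited (X1 X2 : Ob) : exists b : biproduct X1 X2, True.
Proof.
by have [P [i1 [i2 [p1 [p2 bpP]]]]] := biproducts_exist X1 X2; exists (Biproduct bpP).
Qed.

Definition bp (X1 X2 : Ob) : biproduct X1 X2 := projT1 (cid (biproduct_inhabited X1 X2)).
Local Notation "X (+) Y" := (bp_obj (bp X Y)) (at level 50, left associativity).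

Lemma zero_obj_in_E : exists Z, is_zero_obj Z /\ E Z.
Proof. by case: exactE. Qed.

Definition zobj : Ob := projT1 (cid zero_obj_in_E).

Lemma zobj_zero : is_zero_obj zobj.
Proof. exact: (projT2 (cid zero_obj_in_E)).1. Qed.

Lemma E_zobj : E zobj.
Proof. exact: (projT2 (cid zero_obj_in_E)).2. Qed.

Lemma E_isomorphic (X Y : Ob) : E X -> isomorphic X Y -> E Y.
Proof. by case: exactE => + _ _ _; apply. Qed.

Lemma E_bp (X Y : Ob) : E X -> E Y -> E (X (+) Y).
Proof. by case: exactE => _ _ + _; apply; apply: bp_spec. Qed.

Lemma isomorphic_bp (X X' Y Y' : Ob) :
  isomorphic X X' -> isomorphic Y Y' -> isomorphic (X (+) Y) (X' (+) Y').
Proof. by move=> XX' YY'; apply: biproduct_isomorphic XX' YY'; apply: bp_spec. Qed.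

Lemma isomorphic_bp0 (X : Ob) : isomorphic (X (+) zobj) X.
Proof.
exact: (biproduct_isomorphic (bp_spec (bp X zobj)) (biproduct_zeror X zobj_zero)
  (isomorphic_refl _) (isomorphic_refl _)).
Qed.

Lemma isomorphic_bpA (X Y Z : Ob) : isomorphic ((X (+) Y) (+) Z) (X (+) (Y (+) Z)).
Proof.
exact: (biproduct_isomorphic
  (biproduct_assoc (bp_spec (bp X Y)) (bp_spec (bp (X (+) Y) Z)) (bp_spec (bp Y Z)))
  (bp_spec (bp X (Y (+) Z))) (isomorphic_refl _) (isomorphic_refl _)).
Qed.

Lemma isomorphic_bpC (X Y : Ob) : isomorphic (X (+) Y) (Y (+) X).
Proof.
exact: (biproduct_isomorphic (biproduct_sym (bp_spec (bp X Y))) (bp_spec (bp Y X))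
  (isomorphic_refl _) (isomorphic_refl _)).
Qed.

Lemma conflation_bp (X Z : Ob) :
  E X -> E Z -> conflation E (bp_in1 (bp X Z)) (bp_out2 (bp X Z)).
Proof. by move=> EX EZ; split => //; [apply: E_bp | apply/biproduct_ses/bp_spec]. Qed.

Lemma S_equiv_sym (X Y : Ob) : S_equiv E X Y -> S_equiv E Y X.
Proof.
case=> n [sx [sy [s iso_s]]]; exists n, sy, sx, s^-1%g => i.
by apply: isomorphic_sym; have := iso_s (s^-1%g i); rewrite permKV.
Qed.

(* Both sides have a series of length 3 with factors X, Z, W. *)
Lemma conflation_S_equiv (X Y Z W : Ob) (f : Hom X Y) (g : Hom Y Z) :
  conflation E f g -> E W -> S_equiv E (Y (+) W) ((X (+) Z) (+) W).
Proof.
move=> fgE EW; have [EX _ EZ _] := fgE.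
have [sY FsY] := conflation_biproduct_series exactE fgE EW (bp_spec (bp Y W))
  (bp_spec (bp Z W)) zobj_zero E_zobj.
have [sXZ FsXZ] := conflation_biproduct_series exactE (conflation_bp EX EZ) EW
  (bp_spec (bp (X (+) Z) W)) (bp_spec (bp Z W)) zobj_zero E_zobj.
by exists 3, sY, sXZ, 1%g => i; rewrite FsY FsXZ perm1; apply: isomorphic_refl.
Qed.

Record bp_congruence := BpCongruence {
  cong_rel :> Ob -> Ob -> Prop;
  congxx : forall X, cong_rel X X;
  cong_sym : forall X Y, cong_rel X Y -> cong_rel Y X;
  cong_trans : forall X Y Z, cong_rel X Y -> cong_rel Y Z -> cong_rel X Z;
  cong_iso : forall X Y, E X -> isomorphic X Y -> cong_rel X Y;
  cong_bpl : forall X X' Z, E X -> E X' -> E Z -> cong_rel X X' ->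
    cong_rel (X (+) Z) (X' (+) Z) }.
Arguments congxx {_}.
Arguments cong_sym {_ X Y}.
Arguments cong_trans {_ X Y Z}.
Arguments cong_iso {_ X Y}.
Arguments cong_bpl {_ X X' Z}.

Section Quotient.
Variable R : bp_congruence.

Lemma cong_bpr (X X' Z : Ob) : E X -> E X' -> E Z -> R X X' -> R (Z (+) X) (Z (+) X').
Proof.
move=> EX EX' EZ XX'; apply: cong_trans (cong_iso (E_bp EZ EX) (isomorphic_bpC _ _)) _.
apply: cong_trans (cong_bpl EX EX' EZ XX') _.
exact: cong_iso (E_bp EX' EZ) (isomorphic_bpC _ _).
Qed.

Definition cong_class (X : Ob) : Ob -> Prop := fun Y => E Y /\ R X Y.

(* Elements are R-classes of objects of E, represented as predicates. *)
Definition quot : Type := {P : Ob -> Prop | exists X, E X /\ P = cong_class X}.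

Definition qcls (X : Ob) (EX : E X) : quot := exist _ _ (ex_intro _ X (conj EX erefl)).

Definition qrep (u : quot) : Ob := projT1 (cid (proj2_sig u)).

Lemma E_qrep (u : quot) : E (qrep u).
Proof. exact: (projT2 (cid (proj2_sig u))).1. Qed.

Lemma qrepK (u : quot) : qcls (E_qrep u) = u.
Proof.
case: u => P PX; apply: eq_exist; rewrite /qrep /=.
by case: (cid PX) => X /= [_ ->].
Qed.

Lemma qcls_eq (X Y : Ob) (EX : E X) (EY : E Y) : R X Y -> qcls EX = qcls EY.
Proof.
move=> XY; apply: eq_exist; apply: funext => Z; apply: propext; rewrite /cong_class.
by split=> -[EZ RZ]; split => //;
  [apply: cong_trans (cong_sym XY) RZ | apply: cong_trans XY RZ].
Qed.

Lemma qcls_inj (X Y : Ob) (EX : E X) (EY : E Y) : qcls EX = qcls EY -> R X Y.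
Proof.
move=> /(congr1 (fun u : quot => proj1_sig u Y)) /= XY.
by have [] : cong_class X Y by rewrite XY; split; [|apply: congxx].
Qed.

Lemma qclsK (X : Ob) (EX : E X) : R (qrep (qcls EX)) X.
Proof. by apply: (@qcls_inj _ _ (E_qrep (qcls EX)) EX); rewrite qrepK. Qed.

Definition qzero : quot := qcls E_zobj.
Definition qadd (u v : quot) : quot := qcls (E_bp (E_qrep u) (E_qrep v)).

Lemma qaddA : associative qadd.
Proof.
move=> u v w; apply: qcls_eq.
have [Eu Ev Ew] : [/\ E (qrep u), E (qrep v) & E (qrep w)] by split; apply: E_qrep.
apply: cong_trans (cong_bpr (E_qrep _) (E_bp Ev Ew) Eu (qclsK _)) _.
apply: cong_trans (cong_sym (cong_iso (E_bp (E_bp Eu Ev) Ew) (isomorphic_bpA _ _ _))) _.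
exact: cong_bpl (E_bp Eu Ev) (E_qrep _) Ew (cong_sym (qclsK _)).
Qed.

Lemma qaddC : commutative qadd.
Proof.
by move=> u v; apply/qcls_eq/cong_iso/isomorphic_bpC; apply/E_bp; apply: E_qrep.
Qed.

Lemma qadd0 : left_id qzero qadd.
Proof.
move=> u; rewrite -[RHS]qrepK; apply: qcls_eq.
apply: cong_trans (cong_bpl (E_qrep _) E_zobj (E_qrep _) (qclsK _)) _.
apply: cong_trans (cong_iso (E_bp E_zobj (E_qrep _)) (isomorphic_bpC _ _)) _.
exact: cong_iso (E_bp (E_qrep _) E_zobj) (isomorphic_bp0 _).
Qed.

HB.instance Definition _ := gen_eqMixin quot.
HB.instance Definition _ := gen_choiceMixin quot.
HB.instance Definition _ := GRing.isNmodule.Build quot qaddA qaddC qadd0.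

(* Junk value 0 outside E. *)
Definition qclass (X : Ob) : quot :=
  if pselect (E X) is left EX then qcls EX else 0.

Lemma qclassE (X : Ob) (EX : E X) : qclass X = qcls EX.
Proof. by rewrite /qclass; case: pselect => // EX'; apply/qcls_eq/congxx. Qed.

Lemma qclass_inj (X Y : Ob) : E X -> E Y -> qclass X = qclass Y -> R X Y.
Proof. by move=> EX EY; rewrite (qclassE EX) (qclassE EY) => /qcls_inj. Qed.

Lemma qclass_bp (X Y : Ob) (EX : E X) (EY : E Y) :
  qclass (X (+) Y) = qclass X + qclass Y.
Proof.
rewrite (qclassE (E_bp EX EY)) (qclassE EX) (qclassE EY); apply: qcls_eq.
apply: cong_trans (cong_bpl EX (E_qrep _) EY (cong_sym (qclsK EX))) _.
exact: cong_bpr EY (E_qrep _) (E_qrep _) (cong_sym (qclsK EY)).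
Qed.

Lemma qclass_additive :
  (forall X Y Z (f : Hom X Y) (g : Hom Y Z), conflation E f g -> R Y (X (+) Z)) ->
  additive_class E qclass.
Proof.
move=> R_conflation; split.
- move=> X Y EX XY; have EY := E_isomorphic EX XY.
  by rewrite (qclassE EX) (qclassE EY); apply/qcls_eq/cong_iso.
- move=> Z EZ zZ; rewrite (qclassE EZ); apply/qcls_eq/cong_iso => //.
  exact: zero_obj_isomorphic zZ zobj_zero.
- move=> X Y Z f g fgE; have [EX EY EZ _] := fgE.
  rewrite -(qclass_bp EX EZ) (qclassE EY) (qclassE (E_bp EX EZ)).
  exact/qcls_eq/(R_conflation _ _ _ _ _ fgE).
Qed.

End Quotient.

Section SClosedSubcategory.
Variable D : Ob -> Prop.
Hypotheses (subD : is_subcat E D) (closedD : closed_under_S E D).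

Lemma D_isomorphic (X Y : Ob) : isomorphic X Y -> D X <-> D Y.
Proof.
move=> XY; split=> [DX | DY]; first exact: subD.2 XY.
exact: subD.2 DY (isomorphic_sym XY).
Qed.

(* Quantifying over W makes this compatible with (+), not merely an equivalence. *)
Definition D_stable (X Y : Ob) : Prop := forall W, E W -> D (X (+) W) <-> D (Y (+) W).

Definition D_stable_congruence : bp_congruence.
Proof.
apply: (@BpCongruence D_stable) => //.
- by move=> X Y XY W EW; rewrite (XY W EW).
- by move=> X Y Z XY YZ W EW; rewrite (XY W EW) (YZ W EW).
- by move=> X Y _ XY W _; apply/D_isomorphic/isomorphic_bp => //; apply: isomorphic_refl.
- move=> X X' Z _ _ EZ XX' W EW.
  rewrite !(D_isomorphic (isomorphic_bpA _ Z W)).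
  exact: XX' _ (E_bp EZ EW).
Defined.

Lemma D_stable_conflation (X Y Z : Ob) (f : Hom X Y) (g : Hom Y Z) :
  conflation E f g -> D_stable_congruence Y (X (+) Z).
Proof.
move=> fgE W EW; have SYXZ := conflation_S_equiv fgE EW.
by split=> DY; [apply: closedD DY SYXZ | apply: closedD DY (S_equiv_sym SYXZ)].
Qed.

End SClosedSubcategory.

Section Grothendieck.
Variables (M : nmodType) (cls : Ob -> M).
Hypothesis clsG : is_grothendieck_monoid E cls.

Lemma cls_iso (X Y : Ob) : E X -> isomorphic X Y -> cls X = cls Y.
Proof. by case: clsG => -[+ _ _] _; apply. Qed.

Lemma cls_zero (Z : Ob) : E Z -> is_zero_obj Z -> cls Z = 0.
Proof. by case: clsG => -[_ + _] _; apply. Qed.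

Lemma cls_conflation (X Y Z : Ob) (f : Hom X Y) (g : Hom Y Z) :
  conflation E f g -> cls Y = cls X + cls Z.
Proof. by case: clsG => -[_ _ +] _; apply. Qed.

Lemma cls_bp (X Y : Ob) : E X -> E Y -> cls (X (+) Y) = cls X + cls Y.
Proof. by move=> EX EY; apply/cls_conflation/conflation_bp. Qed.

Lemma cls_series (X : Ob) (n : nat) (s : adm_series E X n) :
  E X /\ cls X = \sum_(i < n) cls (ser_F s i).
Proof.
have cls_X k : (k <= n)%N ->
    E (ser_X s k) /\ cls (ser_X s k) = \sum_(i < k) cls (ser_F s i).
  elim: k => [|k IHk] kn.
    have [_ [_ [EX0 _ _ _]]] := ser_infl s kn.
    by rewrite big_ord0 cls_zero //; apply: ser_zero.
  have [_ clsXk] := IHk (ltnW kn).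
  split; first by have [? [? []]] := ser_infl s kn.
  by rewrite big_ord_recr /= -clsXk (cls_conflation (ser_confl s kn)).
have [EXn <-] := cls_X n (leqnn n).
have [_ [_ [_ EX _ _]]] := ser_infl s (leqnn n).
by split => //; apply/esym/cls_iso => //; exists (ser_u s n); apply: ser_top.
Qed.

Lemma S_equiv_cls (X Y : Ob) : E X -> S_equiv E X Y -> E Y /\ cls X = cls Y.
Proof.
move=> EX [n [sX [sY [s iso_s]]]].
have [_ ->] := cls_series sX; have [EY ->] := cls_series sY; split => //.
rewrite [RHS](reindex_inj (@perm_inj _ s)) /=; apply: eq_bigr => i _.
apply: cls_iso (iso_s i).
by have [_ _ ? _] := ser_confl sX (ltn_ord i).
Qed.

(* The class map of [quot R] is additive, hence factors through [cls]. *)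
Lemma cls_congruence (R : bp_congruence) (X Y : Ob) :
  (forall X Y Z (f : Hom X Y) (g : Hom Y Z), conflation E f g -> R Y (X (+) Z)) ->
  E X -> E Y -> cls X = cls Y -> R X Y.
Proof.
move=> R_conflation EX EY clsXY.
have [phi [_ phi_cls _]] := clsG.2 _ _ (qclass_additive R_conflation).
by apply: qclass_inj => //; rewrite -!phi_cls // clsXY.
Qed.

Definition cls_kernel : bp_congruence.
Proof.
apply: (@BpCongruence (fun X Y => cls X = cls Y)) => //.
- by move=> X Y Z -> ->.
- exact: cls_iso.
- by move=> X X' Z EX EX' EZ XX'; rewrite !cls_bp // XX'.
Defined.

Lemma cls_surjective (m : M) : exists2 X, E X & cls X = m.
Proof.
pose iota (u : quot cls_kernel) := cls (qrep u).
have iota_cls X (EX : E X) : iota (qcls cls_kernel EX) = cls X.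
  exact: (qclsK cls_kernel).
have kernel_conflation X Y Z (f : Hom X Y) (g : Hom Y Z) :
    conflation E f g -> cls_kernel Y (X (+) Z).
  by move=> fgE; have [EX _ EZ _] := fgE; rewrite /= cls_bp // (cls_conflation fgE).
have [phi [[phi0 phiD] phi_cls _]] := clsG.2 _ _ (qclass_additive kernel_conflation).
have iota_phi_hom : monoid_hom (iota \o phi).
  split=> [|u v] /=.
    by rewrite phi0 iota_cls cls_zero //; [apply: E_zobj | apply: zobj_zero].
  by rewrite phiD iota_cls cls_bp //; apply: E_qrep.
have [id_M [_ _ uniq_id_M]] := clsG.2 _ _ clsG.1.
have iota_phi_cls X : E X -> (iota \o phi) (cls X) = cls X.
  by move=> EX /=; rewrite phi_cls // qclassE iota_cls.
exists (qrep (phi m)); first exact: E_qrep.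
have -> : cls (qrep (phi m)) = (iota \o phi) m by [].
by rewrite (uniq_id_M _ iota_phi_hom iota_phi_cls m) -(uniq_id_M id).
Qed.

Lemma S_closed_cls (D : Ob -> Prop) (X Y : Ob) :
  is_subcat E D -> closed_under_S E D -> E X -> D Y -> cls X = cls Y -> D X.
Proof.
move=> subD closedD EX DY clsXY.
have XY := cls_congruence (D_stable_conflation subD closedD) EX (subD.1 Y DY) clsXY.
rewrite (D_isomorphic subD (isomorphic_sym (isomorphic_bp0 X))).
by apply/(XY _ E_zobj)/(D_isomorphic subD (isomorphic_sym (isomorphic_bp0 Y))).
Qed.

End Grothendieck.

End ExactCategory.

Lemma abelian_biproducts (A : AbelianCat) (X1 X2 : Defs.Ob A) :
  exists P (i1 : Defs.Hom X1 P) (i2 : Defs.Hom X2 P) (p1 : Defs.Hom P X1)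
    (p2 : Defs.Hom P X2), is_biproduct i1 i2 p1 p2.
Proof. by have [_ [+ _ _ _ _]] := acat_abelian A; apply. Qed.

Theorem mainTheorem10 (A : AbelianCat) (E : Ob A -> Prop)
    (M : nmodType) (cls : Ob A -> M) :
  is_exact_subcat E -> is_grothendieck_monoid E cls ->
  (* (1) *)
  (forall N : M -> Prop, closed_under_S E (D_of E cls N)) /\
  (* (2) the maps are well defined and mutually inverse *)
  ((forall N : M -> Prop, is_subcat E (D_of E cls N)) /\
   (forall N : M -> Prop, forall m, M_of cls (D_of E cls N) m <-> N m) /\
   (forall D : Ob A -> Prop, is_subcat E D -> closed_under_S E D ->
      forall X, D_of E cls (M_of cls D) X <-> D X)).
Proof.
move=> exactE clsG; have bpA := @abelian_biproducts A.
split; [|split; [|split]].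
- move=> N X Y [EX NX] XY; have [EY clsXY] := S_equiv_cls clsG EX XY.
  by split; rewrite // -clsXY.
- move=> N; split=> [X [] // | X Y [EX NX] XY].
  by split; [exact: (E_isomorphic exactE EX XY) | rewrite -(cls_iso clsG EX XY)].
- move=> N m; split=> [[X [[_ NX] <-]] // | Nm].
  have [X EX clsX] := cls_surjective bpA exactE clsG m.
  by exists X; split => //; split; rewrite // clsX.
- move=> D subD closedD X; split=> [[EX [Y [DY clsYX]]] | DX].
    exact: (S_closed_cls bpA exactE clsG subD closedD EX DY (esym clsYX)).
  by split; [apply: subD.1 | exists X].
Qed.
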